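(* For the revision operator $\mathsf{OGI}$: (a) postulate $(P^*1)$ fails in general: there exist $W$, a distance $d$, an observation function $O$, a belief state $b$ and a satisfiable $\alpha$ (which is weakly observable) such that $b\,\mathsf{OGI}\,\alpha$ is not a belief state; (b) if $\alpha$ is strongly observable, then for every belief state $b$, $b\,\mathsf{OGI}\,\alpha$ is a belief state if and only if $\alpha$ is satisfiable.
   Context: $W$ is the finite set of worlds of a finite propositional language $L$; $\|\alpha\|$ the set of $\alpha$-worlds. A belief state is a probability distribution $b$ on $W$. $d$ is a distance on worlds satisfying $d(w,w)<d(v,w)$ for all $v\neq w$. $\mathit{Min}(\alpha,w,d):=\{w'\in\|\alpha\|:\forall w''\in\|\alpha\|,\ d(w',w)\le d(w'',w)\}$. Generalized imaging: $(b\,\mathsf{GI}\,\alpha)(w)=0$ if $w\notin\|\alpha\|$, else $(b\,\mathsf{GI}\,\alpha)(w)=\sum_{w'\in W:\,w\in\mathit{Min}(\alpha,w',d)}b(w')/|\mathit{Min}(\alpha,w',d)|$. With an observation function $O:L\times W\to[0,1]$, $(b\,\mathsf{OGI}\,\alpha)(w)=\frac{O(\alpha,w)(b\,\mathsf{GI}\,\alpha)(w)}{\sum_{w'}O(\alpha,w')(b\,\mathsf{GI}\,\alpha)(w')}$, which is a belief state iff the denominator is positive and undefined otherwise. $\alpha$ is weakly observable iff some $w\models\alpha$ has $O(\alpha,w)>0$; strongly observable iff $O(\alpha,w)>0$ for all $w\models\alpha$. *)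

From HB Require Import structures.
From mathcomp Require Import all_boot all_order all_algebra.
Set Implicit Arguments. Unset Strict Implicit. Unset Printing Implicit Defensive.
Import Order.TTheory GRing.Theory Num.Theory.
Local Open Scope ring_scope.

Inductive pform (n : nat) : Type :=
  | FAtom of 'I_n
  | FTop
  | FNeg of pform n
  | FAnd of pform n & pform n
  | FOr of pform n & pform n.

Definition world (n : nat) : finType := {ffun 'I_n -> bool}.

Fixpoint sat (n : nat) (w : world n) (f : pform n) : bool :=
  match f with
  | FAtom i => w i
  | FTop => true
  | FNeg g => ~~ sat w g
  | FAnd g h => sat w g && sat w h
  | FOr g h => sat w g || sat w h
  end.

Definition models (n : nat) (a : pform n) : {set world n} := [set w | sat w a].

Definition satisfiable (n : nat) (a : pform n) : Prop := exists w : world n, sat w a.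

Section Imaging.
Variables (R : realFieldType) (n : nat).
Notation W := (world n).

Definition faithful_dist (d : W -> W -> R) : Prop :=
  forall v w : W, v != w -> d w w < d v w.

Definition metric (d : W -> W -> R) : Prop :=
  [/\ forall v w, 0 <= d v w,
      forall v w, d v w = 0 <-> v = w,
      forall v w, d v w = d w v &
      forall u v w, d u w <= d u v + d v w].

Definition belief_state (b : W -> R) : Prop :=
  (forall w, 0 <= b w) /\ \sum_(w : W) b w = 1.

Definition obs_fun (O : pform n -> W -> R) : Prop :=
  forall a w, 0 <= O a w <= 1.

Definition weakly_observable (O : pform n -> W -> R) (a : pform n) : Prop :=
  exists2 w : W, sat w a & 0 < O a w.

Definition strongly_observable (O : pform n -> W -> R) (a : pform n) : Prop :=
  forall w : W, sat w a -> 0 < O a w.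

Definition Min (a : pform n) (w : W) (d : W -> W -> R) : {set W} :=
  [set w' | (w' \in models a) && [forall w'', (w'' \in models a) ==> (d w' w <= d w'' w)]].

Definition GI (d : W -> W -> R) (b : W -> R) (a : pform n) (w : W) : R :=
  if w \in models a then
    \sum_(w' : W | w \in Min a w' d) b w' / (#|Min a w' d|)%:R
  else 0.

(* observation-based generalized imaging; None = undefined *)
Definition OGI (d : W -> W -> R) (O : pform n -> W -> R) (b : W -> R) (a : pform n)
  : option (W -> R) :=
  let den := \sum_(w' : W) O a w' * GI d b a w' in
  if 0 < den then Some (fun w => O a w * GI d b a w / den) else None.

Definition OGI_belief (d : W -> W -> R) (O : pform n -> W -> R) (b : W -> R) (a : pform n)
  : Prop :=
  exists2 b' : W -> R, OGI d O b a = Some b' & belief_state b'.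

End Imaging.

From HB Require Import structures.
From mathcomp Require Import all_boot all_order all_algebra.
Import Order.TTheory GRing.Theory Num.Theory.
Set Implicit Arguments.
Unset Strict Implicit.
Unset Printing Implicit Defensive.
Local Open Scope ring_scope.

(* Imaging sends the whole mass of each world to its nonempty set of nearest
   alpha-worlds.  So if alpha is satisfiable, some alpha-world receives positive
   mass, strong observability keeps it positive after weighting by O, and the
   normalising constant of OGI is positive; conversely only alpha-worlds carry
   mass.  Without strong observability the mass can land on unobservable worlds
   only: for a tautology and a faithful distance imaging is the identity, so a
   belief concentrated on a world where O vanishes has nothing to normalise. *)

Lemma psumr_gt0 (R : numDomainType) (T : finType) (F : T -> R) (x : T) :
  (forall y, 0 <= F y) -> 0 < F x -> 0 < \sum_y F y.
Proof.
move=> F_ge0 Fx_gt0; rewrite (bigD1 x) //=.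
by rewrite (lt_le_trans Fx_gt0) // lerDl sumr_ge0.
Qed.

Section Imaging.
Variables (R : realFieldType) (n : nat).
Implicit Types (d : world n -> world n -> R) (O : pform n -> world n -> R)
  (b : world n -> R) (a : pform n).

Lemma belief_state_support b :
  belief_state b -> exists w, 0 < b w.
Proof.
case=> b_ge0 b_sum1.
have [|w /andP [_ bw_gt0]] := @psumr_neq0P _ _ predT b (fun w _ => b_ge0 w).
  by rewrite b_sum1; apply/eqP; rewrite oner_neq0.
by exists w.
Qed.

Definition OGI_den d O b a : R := \sum_w O a w * GI d b a w.

Lemma Min_sub_models a w d : Min a w d \subset models a.
Proof. by apply/subsetP => w'; rewrite inE => /andP []. Qed.

Lemma Min_nonempty a w d : satisfiable a -> exists m, m \in Min a w d.
Proof.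
case=> w0 w0a; have w0_in : w0 \in models a by rewrite inE.
case: (arg_minP (fun x => d x w) w0_in) => m ma m_min.
exists m; rewrite inE; apply/andP; split=> //.
by apply/forallP => y; apply/implyP => /m_min.
Qed.

Lemma Min_valid a w d :
  faithful_dist d -> (forall v, sat v a) -> Min a w d = [set w].
Proof.
move=> d_faithful a_valid; apply/setP => v; rewrite !inE a_valid /=.
case: eqVneq => [->|vw].
  apply/forallP => u; apply/implyP => _.
  by case: (eqVneq u w) => [->|uw]; last exact/ltW/d_faithful.
apply/negbTE/forallP => /(_ w); rewrite inE a_valid /=.
by rewrite leNgt d_faithful.
Qed.

Lemma GI_valid a d b :
  faithful_dist d -> (forall v, sat v a) -> GI d b a =1 b.
Proof.
move=> d_faithful a_valid w; rewrite /GI inE a_valid.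
rewrite (eq_bigl (pred1 w)) => [|v]; last first.
  by rewrite Min_valid // inE eq_sym.
by rewrite big_pred1_eq Min_valid // cards1 divr1.
Qed.

Lemma GI_ge0 d b a w : (forall v, 0 <= b v) -> 0 <= GI d b a w.
Proof.
move=> b_ge0; rewrite /GI; case: ifP => _ //.
by apply: sumr_ge0 => v _; apply: divr_ge0.
Qed.

Lemma GI_unsat d b a w : ~~ sat w a -> GI d b a w = 0.
Proof. by rewrite /GI inE => /negbTE ->. Qed.

Lemma GI_gt0 d b a w m :
  (forall v, 0 <= b v) -> 0 < b w -> m \in Min a w d -> 0 < GI d b a m.
Proof.
move=> b_ge0 bw_gt0 m_min.
have ma : m \in models a by apply: (subsetP (Min_sub_models a w d)).
rewrite /GI ma (bigD1 w) //=; apply: ltr_wpDr.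
  by apply: sumr_ge0 => v _; apply: divr_ge0.
by rewrite divr_gt0 // ltr0n; apply/card_gt0P; exists m.
Qed.

Lemma OGI_beliefE d O b a :
  (forall w, 0 <= O a w) -> (forall w, 0 <= b w) ->
  OGI_belief d O b a <-> 0 < OGI_den d O b a.
Proof.
move=> O_ge0 b_ge0; have OGI_ge0 w : 0 <= O a w * GI d b a w.
  by rewrite mulr_ge0 // GI_ge0.
split; first by case=> b'; rewrite /OGI; case: ifP.
move=> den_gt0; eexists; first by rewrite /OGI den_gt0.
split=> [w|]; first by rewrite divr_ge0 // ltW.
by rewrite -mulr_suml divff // gt_eqF.
Qed.

Lemma OGI_den_gt0_satisfiable d O b a : 0 < OGI_den d O b a -> satisfiable a.
Proof.
case: (pickP (fun w : world n => sat w a)) => [w wa _|a_unsat].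
  by exists w.
by rewrite /OGI_den big1 ?ltxx // => w _; rewrite GI_unsat ?a_unsat ?mulr0.
Qed.

Lemma OGI_den_gt0 d O b a :
  (forall w, 0 <= O a w) -> strongly_observable O a -> belief_state b ->
  satisfiable a -> 0 < OGI_den d O b a.
Proof.
move=> O_ge0 a_obs b_belief a_sat; have [b_ge0 _] := b_belief.
have [w bw_gt0] := belief_state_support b_belief.
have [m m_min] := Min_nonempty w d a_sat.
have /subsetP /(_ m m_min) := Min_sub_models a w d; rewrite inE => ma.
apply: (psumr_gt0 (x := m)) => [v|]; first by rewrite mulr_ge0 // GI_ge0.
by rewrite mulr_gt0 ?a_obs // (GI_gt0 b_ge0 bw_gt0 m_min).
Qed.

Lemma OGI_valid_not_belief d O b a :
  faithful_dist d -> (forall v, sat v a) ->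
  (forall w, 0 <= O a w) -> (forall w, 0 <= b w) ->
  (forall w, O a w * b w = 0) -> ~ OGI_belief d O b a.
Proof.
move=> d_faithful a_valid O_ge0 b_ge0 Ob_eq0 /(OGI_beliefE _ O_ge0 b_ge0).
by rewrite /OGI_den big1 ?ltxx // => w _; rewrite GI_valid.
Qed.

Definition point_belief (w0 : world n) (w : world n) : R := (w == w0)%:R.

Lemma point_belief_state w0 : belief_state (point_belief w0).
Proof.
split=> [w|]; first exact: ler0n.
rewrite (bigD1 w0) //= big1 => [|w /negbTE w_neq].
  by rewrite /point_belief eqxx addr0.
by rewrite /point_belief w_neq.
Qed.

Definition blind_at (w0 : world n) (_ : pform n) (w : world n) : R :=
  (w != w0)%:R.

Lemma blind_at_obs_fun w0 : obs_fun (blind_at w0).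
Proof. by move=> a w; rewrite ler0n lern1 leq_b1. Qed.

Lemma blind_at_point_belief w0 a w : blind_at w0 a w * point_belief w0 w = 0.
Proof.
by rewrite /blind_at /point_belief; case: eqVneq; rewrite ?mul0r ?mulr0.
Qed.

Definition discrete_dist (v w : world n) : R := (v != w)%:R.

Lemma discrete_dist_faithful : faithful_dist discrete_dist.
Proof. by move=> v w vw; rewrite /discrete_dist eqxx vw ltr01. Qed.

Lemma discrete_dist_metric : metric discrete_dist.
Proof.
rewrite /discrete_dist; split=> [v w|v w|v w|u v w]; first exact: ler0n.
- split=> [|->]; last by rewrite eqxx.
  by case: eqVneq => // _ /eqP; rewrite oner_eq0.
- by rewrite eq_sym.
- case: (eqVneq u w) => [->|uw]; first by rewrite addr_ge0.
  case: (eqVneq u v) => [<-|_]; first by rewrite uw add0r.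
  by rewrite lerDl.
Qed.

End Imaging.

Theorem proposition8 (R : realFieldType) :
  (* (a) (P*1) fails in general *)
  (exists (n : nat) (d : world n -> world n -> R) (O : pform n -> world n -> R)
          (b : world n -> R) (a : pform n),
      faithful_dist d /\ metric d /\ obs_fun O /\ belief_state b /\
      satisfiable a /\ weakly_observable O a /\ ~ OGI_belief d O b a)
  /\
  (* (b) strongly observable: OGI yields a belief state iff alpha satisfiable *)
  (forall (n : nat) (d : world n -> world n -> R) (O : pform n -> world n -> R)
          (a : pform n),
      faithful_dist d -> obs_fun O -> strongly_observable O a ->
      forall b : world n -> R, belief_state b ->
        (OGI_belief d O b a <-> satisfiable a)).
Proof.
split.
  pose w0 : world 1 := [ffun=> false]; pose w1 : world 1 := [ffun=> true].
  have w1_neq_w0 : w1 != w0 by apply/eqP => /ffunP /(_ ord0); rewrite !ffunE.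
  exists 1%N, (@discrete_dist R 1), (blind_at R w0), (point_belief R w0).
  exists (FTop 1).
  split; first exact: discrete_dist_faithful.
  split; first exact: discrete_dist_metric.
  split; first exact: blind_at_obs_fun.
  split; first exact: point_belief_state.
  split; first by exists w1.
  split; first by exists w1; rewrite // /blind_at w1_neq_w0 ltr01.
  apply: OGI_valid_not_belief => [||w|w|w]; first exact: discrete_dist_faithful.
  - by [].
  - exact: ler0n.
  - exact: ler0n.
  - exact: blind_at_point_belief.
move=> n d O a _ O_obs a_obs b b_belief.
have O_ge0 w : 0 <= O a w by case/andP: (O_obs a w).
have b_ge0 := b_belief.1.
split=> [/(OGI_beliefE _ O_ge0 b_ge0)|a_sat].
  exact: OGI_den_gt0_satisfiable.
by apply/(OGI_beliefE _ O_ge0 b_ge0); apply: OGI_den_gt0.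
Qed.
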